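(* If $\vdash \mathbb{N}\ \checkmark$, then: (1) if $\mathbb{N}$ contains an input or output process, then $\mathbb{N}$ forward reduces to $\mathbb{N}'$ and that input or output prefix does not occur in $\mathbb{N}'$; (2) if $\mathbb{N}$ contains a checkpoint named $A$, then there is a reduction of $\mathbb{N}$ in which the last step is a rollback making the processes checkpointed by $A$ active processes.
   Context: Setting: a calculus of synchronous multiparty sessions with named checkpoints. Processes include (possibly checkpointed by a name $A$) external choices of inputs and internal choices of outputs. A configuration is a pair of a sequence of checkpointed processes and an active process; when a checkpointed process is crossed in a forward reduction it is pushed onto the sequence. A rollback to checkpoint $A$ makes the processes checkpointed by $A$ stored in the participants' sequences become active again (discarding what is above them), allowed only when the participants not involved have active process $\mathbf{0}$ and no process checkpointed by $A$ stored. A network $\mathbb{N}$ is a parallel composition of multiparty sessions, which reduce independently. $\vdash \mathbb{N}\ \checkmark$ means every multiparty session in $\mathbb{N}$ is typable by a global type $\langle\Upsilon,\mathsf{G}\rangle$ (a sequence $\Upsilon$ of checkpointed single-threaded global types with distinct checkpoint names, and an active single-threaded global type $\mathsf{G}$), with all participants of the global type present in the session and each participant's configuration type agreeing (via subtyping) with the projections of the global type. *)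

From Stdlib Require Import List Arith Relations.
Import ListNotations.

Definition participant := nat.
Definition label := nat.
Definition ckname := nat.

(* Processes:  0 | [A ▷] p?{l_i.P_i}_i | [A ▷] p!{l_i.P_i}_i
   The optional name is the checkpoint (None = not checkpointed). *)
Inductive proc : Type :=
| PNil
| PIn  (c : option ckname) (p : participant) (bs : list (label * proc))
| POut (c : option ckname) (p : participant) (bs : list (label * proc)).

Definition ck_of (P : proc) : option ckname :=
  match P with PNil => None | PIn c _ _ => c | POut c _ _ => c end.

Definition is_comm (P : proc) : Prop :=
  match P with PNil => False | _ => True end.

(* Configuration: sequence of stored checkpointed processes (oldest first,
   top of the stack at the end) and the active process. *)
Definition config := (list proc * proc)%type.
Definition session := list (participant * config).
Definition network := list session.

Inductive stype : Type :=
| TEnd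
| TIn  (c : option ckname) (p : participant) (bs : list (label * stype))
| TOut (c : option ckname) (p : participant) (bs : list (label * stype)).

Inductive has_type : proc -> stype -> Prop :=
| ht_nil : has_type PNil TEnd
| ht_in c p bs ts :
    bs <> [] -> NoDup (map fst bs) ->
    Forall2 (fun b t => fst b = fst t /\ has_type (snd b) (snd t)) bs ts ->
    has_type (PIn c p bs) (TIn c p ts)
| ht_out c p bs ts :
    bs <> [] -> NoDup (map fst bs) ->
    Forall2 (fun b t => fst b = fst t /\ has_type (snd b) (snd t)) bs ts ->
    has_type (POut c p bs) (TOut c p ts).

Inductive subtype : stype -> stype -> Prop :=
| sub_end : subtype TEnd TEnd
| sub_in c p ts us :
    (forall l U, In (l, U) us -> exists T, In (l, T) ts /\ subtype T U) ->
    subtype (TIn c p ts) (TIn c p us)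
| sub_out c p ts us :
    (forall l T, In (l, T) ts -> exists U, In (l, U) us /\ subtype T U) ->
    subtype (TOut c p ts) (TOut c p us).

Inductive global : Type :=
| GEnd
| GComm (c : option ckname) (p q : participant) (bs : list (label * global)).

Definition gck (G : global) : option ckname :=
  match G with GEnd => None | GComm c _ _ _ => c end.

Inductive in_parts : participant -> global -> Prop :=
| ip_snd c p q bs : in_parts p (GComm c p q bs)
| ip_rcv c p q bs : in_parts q (GComm c p q bs)
| ip_br c p q bs r b : In b bs -> in_parts r (snd b) -> in_parts r (GComm c p q bs).

Inductive add_ck : option ckname -> stype -> stype -> Prop :=
| ack_none T : add_ck None T T
| ack_end A : add_ck (Some A) TEnd TEnd
| ack_in A p ts : add_ck (Some A) (TIn None p ts) (TIn (Some A) p ts)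
| ack_out A p ts : add_ck (Some A) (TOut None p ts) (TOut (Some A) p ts).

(* Projection  G ↾ r = T  (partial; plain merge for third parties;
   a checkpoint is seen by every participant of the global type). *)
Inductive proj : participant -> global -> stype -> Prop :=
| pj_end r : proj r GEnd TEnd
| pj_snd c p q bs ts :
    p <> q -> bs <> [] -> NoDup (map fst bs) ->
    Forall2 (fun b t => fst b = fst t /\ proj p (snd b) (snd t)) bs ts ->
    proj p (GComm c p q bs) (TOut c q ts)
| pj_rcv c p q bs ts :
    p <> q -> bs <> [] -> NoDup (map fst bs) ->
    Forall2 (fun b t => fst b = fst t /\ proj q (snd b) (snd t)) bs ts ->
    proj q (GComm c p q bs) (TIn c p ts)
| pj_oth c p q bs r T T' :
    p <> q -> r <> p -> r <> q -> bs <> [] -> NoDup (map fst bs) ->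
    (forall b, In b bs -> proj r (snd b) T) ->
    add_ck c T T' ->
    proj r (GComm c p q bs) T'.

Inductive projU (r : participant) : list global -> list stype -> Prop :=
| pu_nil : projU r [] []
| pu_in g gs T Ts : in_parts r g -> proj r g T -> projU r gs Ts -> projU r (g :: gs) (T :: Ts)
| pu_out g gs Ts : ~ in_parts r g -> projU r gs Ts -> projU r (g :: gs) Ts.

Definition conf_agrees (r : participant) (cf : config) (Ups : list global) (G : global) : Prop :=
  exists Ts T,
    projU r Ups Ts /\ proj r G T /\
    Forall2 (fun Q U => exists T0, has_type Q T0 /\ subtype T0 U) (fst cf) Ts /\
    (exists T0, has_type (snd cf) T0 /\ subtype T0 T).

Definition typable_session (M : session) : Prop :=
  exists (Ups : list global) (G : global),
    Forall (fun g => gck g <> None) Ups /\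
    NoDup (map gck Ups) /\
    NoDup (map fst M) /\
    (forall r, (in_parts r G \/ Exists (in_parts r) Ups) -> In r (map fst M)) /\
    Forall (fun e => conf_agrees (fst e) (snd e) Ups G) M.

Definition net_checked (N : network) : Prop := Forall typable_session N.

Definition push (c : option ckname) (P : proc) (s : list proc) : list proc :=
  match c with None => s | Some _ => s ++ [P] end.

Definition upd (r : participant) (cf : config) (M : session) : session :=
  map (fun e => if Nat.eqb (fst e) r then (r, cf) else e) M.

Inductive sess_fwd : session -> session -> Prop :=
| sf_comm M p q sp sq cp cq bsp bsq l P' Q' :
    p <> q ->
    In (p, (sp, POut cp q bsp)) M ->
    In (q, (sq, PIn cq p bsq)) M ->
    In (l, P') bsp -> In (l, Q') bsq ->
    sess_fwd M (upd q (push cq (PIn cq p bsq) sq, Q')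
                 (upd p (push cp (POut cp q bsp) sp, P') M)).

Definition stores (A : ckname) (s : list proc) : Prop := In (Some A) (map ck_of s).

Inductive rb_conf (A : ckname) : config -> config -> Prop :=
| rb_back s1 Q s2 P :
    ck_of Q = Some A -> ~ stores A s2 ->
    rb_conf A (s1 ++ Q :: s2, P) (s1, Q)
| rb_idle s : ~ stores A s -> rb_conf A (s, PNil) (s, PNil).

Inductive sess_rb (A : ckname) : session -> session -> Prop :=
| srb M M' :
    Forall2 (fun e e' => fst e = fst e' /\ rb_conf A (snd e) (snd e')) M M' ->
    Exists (fun e => stores A (fst (snd e))) M ->
    sess_rb A M M'.

Inductive step_kind := Fwd | Rb (A : ckname).

Definition sess_step (k : step_kind) (M M' : session) : Prop :=
  match k with Fwd => sess_fwd M M' | Rb A => sess_rb A M M' end.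

Inductive net_step (k : step_kind) (i : nat) : network -> network -> Prop :=
| ns N1 M M' N2 :
    length N1 = i -> sess_step k M M' ->
    net_step k i (N1 ++ M :: N2) (N1 ++ M' :: N2).

Definition fwd_red (N N' : network) : Prop := exists i, net_step Fwd i N N'.
Definition red (N N' : network) : Prop := exists k i, net_step k i N N'.
Definition fwd_star := clos_refl_trans network fwd_red.
Definition red_star := clos_refl_trans network red.

(* A typable session is driven by its global type: the two participants of the
   first communication of G have matching output and input processes, so they
   can synchronise on some branch, after which the session is typable by the
   continuation of G along that branch. Iterating, every session of a checked
   network forward reduces to one in which all active processes are 0.
   Forward steps only push crossed checkpointed processes, so every checkpoint
   name seen by a participant (stored or active) is then stored; rolling back
   all participants of the idle session to A makes the process checkpointed
   by A active again. *)
From Stdlib Require Import List Arith Relations.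
Import ListNotations.

Lemma Forall2_In_l {A B} (R : A -> B -> Prop) l1 l2 x :
  Forall2 R l1 l2 -> In x l1 -> exists y, In y l2 /\ R x y.
Proof.
  induction 1 as [|a b l1 l2 Hab _ IH]; [easy|].
  intros [<-|Hx]; [now exists b; split; [left|]|].
  destruct (IH Hx) as [y [Hy Hxy]]. now exists y; split; [right|].
Qed.

Lemma Forall2_In_r {A B} (R : A -> B -> Prop) l1 l2 y :
  Forall2 R l1 l2 -> In y l2 -> exists x, In x l1 /\ R x y.
Proof.
  intros H Hy. exact (Forall2_In_l _ _ _ y (Forall2_flip H) Hy).
Qed.

Fixpoint global_ind_nested (P : global -> Prop) (HEnd : P GEnd)
  (HComm : forall c p q bs, (forall b, In b bs -> P (snd b)) -> P (GComm c p q bs))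
  (g : global) : P g :=
  match g with
  | GEnd => HEnd
  | GComm c p q bs =>
      HComm c p q bs
        ((fix branches (l : list (label * global)) : forall b, In b l -> P (snd b) :=
            match l with
            | [] => fun b (H : In b []) => match H with end
            | (l0, g0) :: l' => fun b H =>
                match H with
                | or_introl E =>
                    eq_ind (l0, g0) (fun b => P (snd b))
                      (global_ind_nested P HEnd HComm g0) b E
                | or_intror H' => branches l' b H'
                end
            end) bs)
  end.

(** * Subtyping up to checkpoint names *)

(* Third parties see the projection of a communication with its checkpoint
   added (add_ck); typing against the continuation forgets it, so the
   invariant compares types only up to the checkpoint name of the head. *)
Definition subtype_up_to_ck (T U : stype) : Prop :=
  match T, U with
  | TEnd, TEnd => True
  | TIn _ p ts, TIn _ p' us =>
      p = p' /\ forall l U, In (l, U) us -> exists T, In (l, T) ts /\ subtype T U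
  | TOut _ p ts, TOut _ p' us =>
      p = p' /\ forall l T, In (l, T) ts -> exists U, In (l, U) us /\ subtype T U
  | _, _ => False
  end.

Lemma subtype_up_to_ckW T U : subtype T U -> subtype_up_to_ck T U.
Proof. destruct 1; simpl; auto. Qed.

Lemma add_ck_up_to_ck c T T' T0 :
  add_ck c T T' -> subtype_up_to_ck T0 T' -> subtype_up_to_ck T0 T.
Proof. destruct 1; destruct T0; simpl; auto. Qed.

Definition conforms (P : proc) (T : stype) : Prop :=
  exists T0, has_type P T0 /\ subtype_up_to_ck T0 T.

Lemma conforms_end P : conforms P TEnd -> P = PNil.
Proof.
  intros [[|c p ts|c p ts] [HP Hsub]]; try contradiction.
  now inversion HP.
Qed.

Lemma conforms_out P c q ts :
  conforms P (TOut c q ts) ->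
  exists cp bsp, P = POut cp q bsp /\ bsp <> [] /\
    forall l P', In (l, P') bsp -> exists U, In (l, U) ts /\ conforms P' U.
Proof.
  intros [[|c0 p0 ts0|c0 q0 ts0] [HP Hsub]]; try contradiction.
  destruct Hsub as [<- Hsub].
  inversion HP as [| |c1 q1 bsp ts1 Hne _ Hbr]; subst.
  exists c0, bsp; repeat split; [assumption|].
  intros l P' Hin.
  destruct (Forall2_In_l _ _ _ _ Hbr Hin) as [[l0 T0] [HT0 [Hl Hty]]].
  simpl in Hl, Hty; subst l0.
  destruct (Hsub l T0 HT0) as [U [HU HTU]].
  exists U; split; [assumption|]. exists T0; split; [|apply subtype_up_to_ckW]; assumption.
Qed.

Lemma conforms_in P c p us :
  conforms P (TIn c p us) ->
  exists cq bsq, P = PIn cq p bsq /\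
    forall l U, In (l, U) us -> exists Q', In (l, Q') bsq /\ conforms Q' U.
Proof.
  intros [[|c0 p0 ts0|c0 q0 ts0] [HP Hsub]]; try contradiction.
  destruct Hsub as [<- Hsub].
  inversion HP as [|c1 p1 bsq ts1 _ _ Hbr|]; subst.
  exists c0, bsq; split; [reflexivity|].
  intros l U HU.
  destruct (Hsub l U HU) as [T0 [HT0 HTU]].
  destruct (Forall2_In_r _ _ _ _ Hbr HT0) as [[l0 Q'] [HQ' [Hl Hty]]].
  simpl in Hl, Hty; subst l0.
  exists Q'; split; [assumption|]. exists T0; split; [|apply subtype_up_to_ckW]; assumption.
Qed.

Lemma proj_sender c p q bs T :
  proj p (GComm c p q bs) T ->
  p <> q /\ exists ts, T = TOut c q ts /\
    forall l U, In (l, U) ts -> exists b, In b bs /\ fst b = l /\ proj p (snd b) U.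
Proof.
  intros H; inversion H as [|c1 p1 q1 bs1 ts Hpq _ _ Hbr|c1 p1 q1 bs1 ts Hpq|
                            c1 p1 q1 bs1 r1 T1 T' _ Hrp]; subst; try congruence.
  split; [assumption|]. exists ts; split; [reflexivity|].
  intros l U HU.
  destruct (Forall2_In_r _ _ _ _ Hbr HU) as [b [Hb [Hl Hpj]]].
  now exists b.
Qed.

Lemma proj_receiver c p q bs T :
  proj q (GComm c p q bs) T ->
  exists us, T = TIn c p us /\
    forall b, In b bs -> exists U, In (fst b, U) us /\ proj q (snd b) U.
Proof.
  intros H; inversion H as [|c1 p1 q1 bs1 ts Hpq|c1 p1 q1 bs1 ts Hpq _ _ Hbr|
                            c1 p1 q1 bs1 r1 T1 T' _ _ Hrq]; subst; try congruence.
  exists ts; split; [reflexivity|].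
  intros b Hb.
  destruct (Forall2_In_l _ _ _ _ Hbr Hb) as [[l U] [HU [Hl Hpj]]].
  simpl in Hl; subst l. now exists U.
Qed.

Lemma proj_third_party c p q bs r T P :
  proj r (GComm c p q bs) T -> r <> p -> r <> q -> conforms P T ->
  forall b, In b bs -> exists U, proj r (snd b) U /\ conforms P U.
Proof.
  intros H Hrp Hrq [T0 [HP Hsub]] b Hb.
  inversion H as [| | |c1 p1 q1 bs1 r1 U T' _ _ _ _ _ Hbr Hck]; subst; try congruence.
  exists U; split; [auto|]. exists T0; split; [|eapply add_ck_up_to_ck]; eassumption.
Qed.

Lemma in_upd x cf M e : In e (upd x cf M) -> e = (x, cf) \/ (fst e <> x /\ In e M).
Proof.
  unfold upd; rewrite in_map_iff; intros [e0 [<- Hin]].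
  destruct (Nat.eqb (fst e0) x) eqn:E; [now left|].
  right; split; [apply Nat.eqb_neq|]; assumption.
Qed.

Lemma in_upd_same x cf cf0 M : In (x, cf0) M -> In (x, cf) (upd x cf M).
Proof.
  intros H; apply in_map_iff; exists (x, cf0); simpl; rewrite Nat.eqb_refl; auto.
Qed.

Lemma in_upd_other x cf M e : In e M -> fst e <> x -> In e (upd x cf M).
Proof.
  intros H Hx; apply in_map_iff; exists e.
  apply Nat.eqb_neq in Hx; destruct e as [r cf0]; simpl in *; rewrite Hx; auto.
Qed.

Lemma map_fst_upd x cf M : map fst (upd x cf M) = map fst M.
Proof.
  unfold upd; rewrite map_map; apply map_ext; intros [a b]; simpl.
  destruct (Nat.eqb a x) eqn:E; [symmetry; apply Nat.eqb_eq|]; auto.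
Qed.

Lemma NoDup_fst_uniq (M : session) r a b :
  NoDup (map fst M) -> In (r, a) M -> In (r, b) M -> a = b.
Proof.
  induction M as [|e M IH]; simpl; intros Hnd Ha Hb; [contradiction|].
  inversion Hnd as [|x l Hnotin Hnd']; subst.
  destruct Ha as [Ha|Ha], Hb as [Hb|Hb]; subst.
  - now injection Hb.
  - now apply (in_map fst) in Hb.
  - now apply (in_map fst) in Ha.
  - eauto.
Qed.

Lemma in_map_fst (M : session) r : In r (map fst M) -> exists s P, In (r, (s, P)) M.
Proof. rewrite in_map_iff; intros [[r' [s P]] [<- H]]; eauto. Qed.

Definition session_inv (G : global) (M : session) : Prop :=
  NoDup (map fst M) /\ (forall r, in_parts r G -> In r (map fst M)) /\
  (forall r s P, In (r, (s, P)) M -> exists T, proj r G T /\ conforms P T).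

Lemma checked_session_inv N M :
  net_checked N -> In M N -> exists G, session_inv G M.
Proof.
  intros HN HM.
  destruct (proj1 (Forall_forall _ N) HN M HM) as [Ups [G [_ [_ [Hnd [Hparts Hconf]]]]]].
  exists G; split; [|split]; [assumption|auto|].
  intros r s P Hin.
  destruct (proj1 (Forall_forall _ M) Hconf _ Hin) as [Ts [T [_ [HT [_ [T0 [HP Hsub]]]]]]].
  exists T; split; [|exists T0; split; [|apply subtype_up_to_ckW]]; assumption.
Qed.

Lemma session_inv_step c p q bs M :
  session_inv (GComm c p q bs) M ->
  exists b M1, In b bs /\ sess_fwd M M1 /\ session_inv (snd b) M1.
Proof.
  intros [Hnd [Hparts Hty]].
  destruct (in_map_fst M p) as [sp [P Hp]]; [apply Hparts; constructor|].
  destruct (in_map_fst M q) as [sq [Q Hq]]; [apply Hparts; constructor|].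
  destruct (Hty _ _ _ Hp) as [Tp [HTp HPp]].
  destruct (Hty _ _ _ Hq) as [Tq [HTq HQq]].
  destruct (proj_sender _ _ _ _ _ HTp) as [Hpq [ts [-> Hts]]].
  destruct (proj_receiver _ _ _ _ _ HTq) as [us [-> Hus]].
  destruct (conforms_out _ _ _ _ HPp) as [cp [bsp [-> [Hne Hbsp]]]].
  destruct (conforms_in _ _ _ _ HQq) as [cq [bsq [-> Hbsq]]].
  destruct bsp as [|[l P'] bsp']; [congruence|].
  destruct (Hbsp l P' (or_introl eq_refl)) as [U [HU HP'U]].
  destruct (Hts l U HU) as [b [Hb [Hl HpU]]].
  destruct (Hus b Hb) as [V [HV HqV]]; rewrite Hl in HV.
  destruct (Hbsq l V HV) as [Q' [HQ' HQ'V]].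
  set (bsp := (l, P') :: bsp').
  exists b, (upd q (push cq (PIn cq p bsq) sq, Q') (upd p (push cp (POut cp q bsp) sp, P') M)).
  split; [assumption|split].
  { apply sf_comm with (l := l); [exact Hpq|exact Hp|exact Hq|now left|exact HQ']. }
  split; [rewrite !map_fst_upd; assumption|split].
  - intros r Hr. rewrite !map_fst_upd. apply Hparts. eapply ip_br; eassumption.
  - intros r s R Hin.
    destruct (in_upd _ _ _ _ Hin) as [E|[Hrq Hin']]; [injection E as -> -> ->; eauto|].
    destruct (in_upd _ _ _ _ Hin') as [E|[Hrp Hin'']]; [injection E as -> -> ->; eauto|].
    destruct (Hty _ _ _ Hin'') as [T [HT HRT]].
    destruct (proj_third_party _ _ _ _ _ _ _ HT Hrp Hrq HRT b Hb) as [W HW].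
    now exists W.
Qed.

Definition seen (A : ckname) (cf : config) : Prop :=
  stores A (fst cf) \/ ck_of (snd cf) = Some A.

Definition seen_le (cf cf' : config) : Prop := forall A, seen A cf -> seen A cf'.

Definition sess_seen_le (M M' : session) : Prop :=
  forall r cf, In (r, cf) M -> exists cf', In (r, cf') M' /\ seen_le cf cf'.

Lemma sess_seen_le_refl M : sess_seen_le M M.
Proof. intros r cf H; exists cf; split; [assumption|intros A; auto]. Qed.

Lemma sess_seen_le_trans M1 M2 M3 :
  sess_seen_le M1 M2 -> sess_seen_le M2 M3 -> sess_seen_le M1 M3.
Proof.
  intros H12 H23 r cf H.
  destruct (H12 r cf H) as [cf2 [H2 Hle2]].
  destruct (H23 r cf2 H2) as [cf3 [H3 Hle3]].
  exists cf3; split; [|intros A HA; apply Hle3, Hle2]; assumption.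
Qed.

Lemma stores_app A s k : stores A s -> stores A (s ++ k).
Proof. unfold stores; rewrite map_app; intros H; apply in_or_app; auto. Qed.

Lemma seen_le_cross P s P' : seen_le (s, P) (push (ck_of P) P s, P').
Proof.
  intros A [HA|HA]; left; simpl in *.
  - destruct (ck_of P); [apply stores_app|]; assumption.
  - rewrite HA; unfold push, stores; rewrite map_app; simpl; rewrite HA.
    apply in_or_app; right; left; reflexivity.
Qed.

Lemma sess_fwd_seen_le M M' :
  NoDup (map fst M) -> sess_fwd M M' -> sess_seen_le M M'.
Proof.
  intros Hnd Hstep r cf Hin.
  destruct Hstep as [M p q sp sq cp cq bsp bsq l P' Q' Hpq Hp Hq _ _].
  destruct (Nat.eq_dec r q) as [->|Hrq].
  - rewrite (NoDup_fst_uniq _ _ _ _ Hnd Hin Hq).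
    eexists; split; [eapply in_upd_same, in_upd_other; [exact Hq|auto]|].
    apply (seen_le_cross (PIn cq p bsq)).
  - destruct (Nat.eq_dec r p) as [->|Hrp].
    + rewrite (NoDup_fst_uniq _ _ _ _ Hnd Hin Hp).
      eexists; split; [apply in_upd_other; [eapply in_upd_same; exact Hp|auto]|].
      apply (seen_le_cross (POut cp q bsp)).
    + exists cf; split; [|intros A; auto].
      apply in_upd_other; [apply in_upd_other|]; auto.
Qed.

(** * Completion of typable sessions *)

Definition idle (M : session) : Prop := forall e, In e M -> snd (snd e) = PNil.

Lemma session_inv_completes G :
  forall M, session_inv G M ->
  exists M', clos_refl_trans _ sess_fwd M M' /\ sess_seen_le M M' /\ idle M'.
Proof.
  induction G as [|c p q bs IH] using global_ind_nested; intros M HM.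
  - exists M; split; [apply rt_refl|split; [apply sess_seen_le_refl|]].
    intros [r [s P]] Hin. destruct HM as [_ [_ Hty]].
    destruct (Hty r s P Hin) as [T [HT HPT]]. inversion HT; subst.
    now apply conforms_end.
  - destruct (session_inv_step _ _ _ _ _ HM) as [b [M1 [Hb [Hstep HM1]]]].
    destruct (IH b Hb M1 HM1) as [M' [Hstar [Hle Hidle]]].
    exists M'; split; [eapply rt_trans; [apply rt_step|]; eassumption|split; [|assumption]].
    eapply sess_seen_le_trans; [|eassumption].
    apply sess_fwd_seen_le; [apply HM|assumption].
Qed.

Lemma fwd_star_in_context L1 L2 M M' :
  clos_refl_trans _ sess_fwd M M' -> fwd_star (L1 ++ M :: L2) (L1 ++ M' :: L2).
Proof.
  induction 1 as [M M' H| |]; [|apply rt_refl|eapply rt_trans; eassumption].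
  apply rt_step. exists (length L1). now constructor.
Qed.

Lemma fwd_star_red_star N N' : fwd_star N N' -> red_star N N'.
Proof.
  induction 1 as [N N' [i H]| |]; [|apply rt_refl|eapply rt_trans; eassumption].
  apply rt_step. now exists Fwd, i.
Qed.

Lemma nth_error_middle {X} (L1 L2 : list X) x : nth_error (L1 ++ x :: L2) (length L1) = Some x.
Proof. rewrite nth_error_app2, Nat.sub_diag; reflexivity. Qed.

Lemma checked_network_completes N i M :
  net_checked N -> nth_error N i = Some M ->
  exists L1 L2 M', N = L1 ++ M :: L2 /\ length L1 = i /\
    fwd_star N (L1 ++ M' :: L2) /\ sess_seen_le M M' /\ idle M'.
Proof.
  intros HN Hi.
  destruct (checked_session_inv N M HN (nth_error_In _ _ Hi)) as [G HG].
  destruct (session_inv_completes G M HG) as [M' [Hstar [Hle Hidle]]].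
  destruct (nth_error_split N i Hi) as [L1 [L2 [-> Hlen]]].
  exists L1, L2, M'; repeat split; try assumption.
  now apply fwd_star_in_context.
Qed.

(** * Rollback of idle sessions *)

Lemma stores_dec A s : {stores A s} + {~ stores A s}.
Proof. apply in_dec; decide equality; apply Nat.eq_dec. Qed.

Lemma stores_last A s :
  stores A s -> exists s1 Q s2, s = s1 ++ Q :: s2 /\ ck_of Q = Some A /\ ~ stores A s2.
Proof.
  induction s as [|x s IH]; [easy|]. intros Hs.
  destruct (stores_dec A s) as [Htail|Htail].
  - destruct (IH Htail) as [s1 [Q [s2 [-> HQ]]]]. now exists (x :: s1), Q, s2.
  - destruct Hs as [Hx|Hs]; [|contradiction]. now exists [], x, s.
Qed.

Lemma idle_session_rollback A M p s :
  idle M -> In (p, (s, PNil)) M -> stores A s ->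
  exists M', sess_rb A M M' /\ exists s' P', In (p, (s', P')) M' /\ ck_of P' = Some A.
Proof.
  intros Hidle Hp Hs.
  assert (HM : exists M', Forall2 (fun e e' => fst e = fst e' /\ rb_conf A (snd e) (snd e')) M M').
  { clear Hp. induction M as [|[r [t P]] M IHM]; [now exists []|].
    destruct IHM as [M' HM']; [intros e He; apply Hidle; now right|].
    assert (P = PNil) as -> by (apply (Hidle (r, (t, P))); now left).
    destruct (stores_dec A t) as [Ht|Ht].
    - destruct (stores_last A t Ht) as [t1 [Q [t2 [-> [HQ Ht2]]]]].
      exists ((r, (t1, Q)) :: M'); constructor; [split; [|apply rb_back]|]; auto.
    - exists ((r, (t, PNil)) :: M'); constructor; [split; [|apply rb_idle]|]; auto. }
  destruct HM as [M' HM].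
  exists M'; split.
  - constructor; [assumption|]. apply Exists_exists; now exists (p, (s, PNil)).
  - destruct (Forall2_In_l _ _ _ _ HM Hp) as [[r [s' P']] [Hin [Hr Hrb]]].
    simpl in Hr, Hrb; subst r.
    inversion Hrb; subst; [|contradiction].
    now exists s', P'.
Qed.

Theorem theorem3 (N : network) :
  net_checked N ->
  (forall (i : nat) (M : session) (p : participant) (s : list proc) (P : proc),
      nth_error N i = Some M -> In (p, (s, P)) M -> is_comm P ->
      exists N' M' s' P',
        fwd_star N N' /\ nth_error N' i = Some M' /\
        In (p, (s', P')) M' /\ P' <> P)
  /\
  (forall (i : nat) (M : session) (p : participant) (s : list proc) (P : proc) (A : ckname),
      nth_error N i = Some M -> In (p, (s, P)) M ->
      (stores A s \/ ck_of P = Some A) ->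
      exists N1 N2 M2 s2 P2,
        red_star N N1 /\ net_step (Rb A) i N1 N2 /\
        nth_error N2 i = Some M2 /\ In (p, (s2, P2)) M2 /\ ck_of P2 = Some A).
Proof.
  intros HN; split.
  - intros i M p s P Hi Hp HP.
    destruct (checked_network_completes N i M HN Hi) as [L1 [L2 [M' [_ [<- [Hstar [Hle Hidle]]]]]]].
    destruct (Hle p (s, P) Hp) as [[s' P'] [Hp' _]].
    exists (L1 ++ M' :: L2), M', s', P'; repeat split; [assumption|apply nth_error_middle|assumption|].
    pose proof (Hidle _ Hp') as HP'; simpl in HP'; subst P'.
    now destruct P.
  - intros i M p s P A Hi Hp HA.
    destruct (checked_network_completes N i M HN Hi) as [L1 [L2 [M' [_ [<- [Hstar [Hle Hidle]]]]]]].
    destruct (Hle p (s, P) Hp) as [[s' P'] [Hp' HseenA]].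
    pose proof (Hidle _ Hp') as HP'; simpl in HP'; subst P'.
    assert (Hs' : stores A s') by (destruct (HseenA A HA) as [H|H]; [exact H|discriminate]).
    destruct (idle_session_rollback A M' p s' Hidle Hp' Hs') as [M2 [Hrb [s2 [P2 HP2]]]].
    exists (L1 ++ M' :: L2), (L1 ++ M2 :: L2), M2, s2, P2.
    split; [now apply fwd_star_red_star|split; [now constructor|split; [apply nth_error_middle|exact HP2]]].
Qed.
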